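(* Let $C>1$, $\alpha\in(0,1/4)$, $\gamma>C(20\alpha)^{1/5}$ and $r>5/\gamma$. Suppose $H$ is sampled from a $Cr/n$-spread distribution on subgraphs of $K_{n,n}$. Then, with probability at least $1-n^{-14}$, every $V\subset V(K_{n,n})$ with $|V|<2\alpha n$ satisfies $|E(H[V])|\le \gamma r|V|$ (i.e. $H$ is $(\alpha,\gamma r/n)$-sparse).
   Context: A random subgraph $H$ of $K_{n,n}$ is $q$-spread if $\mathbb{P}(S\subset H)\le q^{|S|}$ for every $S\subset E(K_{n,n})$. $H[V]$ denotes the subgraph of $H$ induced by $V$. *)

From HB Require Import structures.
From mathcomp Require Import all_boot all_order all_algebra.
From mathcomp Require Import all_classical all_reals.
From mathcomp Require Import exp.
Set Implicit Arguments. Unset Strict Implicit. Unset Printing Implicit Defensive.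
Import Order.TTheory GRing.Theory Num.Theory.
Local Open Scope ring_scope.

(* K_{n,n}: left vertices 'I_n (inl), right vertices 'I_n (inr);
   the edge (i,j) joins left vertex i and right vertex j. *)
Definition vtx (n : nat) : finType := ('I_n + 'I_n)%type.
Definition edge (n : nat) : finType := ('I_n * 'I_n)%type.

(* A random subgraph H of K_{n,n} (spanning, given by its edge set)
   is a probability distribution on {set edge n}. *)
Definition is_distr (R : realType) (n : nat) (mu : {ffun {set edge n} -> R}) :=
  (forall H, 0 <= mu H) /\ \sum_(H : {set edge n}) mu H = 1.

Definition prob (R : realType) (n : nat) (mu : {ffun {set edge n} -> R})
  (P : pred {set edge n}) : R := \sum_(H : {set edge n} | P H) mu H.

Definition spread (R : realType) (n : nat) (q : R) (mu : {ffun {set edge n} -> R}) :=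
  forall S : {set edge n}, prob mu (fun H => S \subset H) <= q ^+ #|S|.

Definition induced (n : nat) (H : {set edge n}) (V : {set vtx n}) : {set edge n} :=
  [set e in H | (inl e.1 \in V) && (inr e.2 \in V)].

Definition sparse (R : realType) (n : nat) (alpha p : R) (H : {set edge n}) : Prop :=
  forall V : {set vtx n}, (#|V|%:R < 2 * alpha * n%:R) ->
    (#|induced H V|%:R <= p * n%:R * #|V|%:R).

(* If H is not sparse, some small V has more than beta |V| edges in H[V],
   with beta = gamma r; hence H contains a k-subset S of E(K[V]) with
   k = floor(beta |V|) + 1.  By spreadness and a union bound over V and S,
   the failure probability is at most the sum over V of
   C(|V|^2/4, k) (C r/n)^k <= b^k with b = e C |V| / (4 gamma n).  The
   choice of gamma makes b at most 1, and since k > 5 |V| the V-term is at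
   most b^(5|V|) (it vanishes when |V| <= 20, as then C(|V|^2/4, k) = 0).
   Grouping the sets V by their size v, with u = v/n < 2 alpha < 1/2, the
   sizes contribute at most (u^3/5)^v <= n^-15 (2v)^15 / 40^v <= n^-15/3
   each, and 2n+1 sizes give n^-14. *)
From HB Require Import structures.
From mathcomp Require Import all_boot all_order all_algebra.
From mathcomp Require Import all_classical all_reals.
From mathcomp Require Import exp.
From mathcomp Require Import sequences ring lra zify.
Set Implicit Arguments. Unset Strict Implicit. Unset Printing Implicit Defensive.
Import Order.TTheory GRing.Theory Num.Theory.
Local Open Scope ring_scope.

Lemma ffact_leq_expn n m : (n ^_ m <= n ^ m)%N.
Proof.
elim: m n => [|m IH] n //; rewrite ffactnS expnS leq_mul //.
apply: leq_trans (IH _) _; case: m {IH} => [|m]; first by rewrite !expn0.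
by rewrite leq_exp2r // leq_pred.
Qed.

Lemma natr_expn_le_expR_fact (R : realType) k :
  k%:R ^+ k <= expR 1 ^+ k * k`!%:R :> R.
Proof.
case: k => [|j]; first by rewrite !expr0 mul1r.
have := @expR_ge1Dxn R j.+1%:R j (ler0n _ _).
rewrite -[X in expR X]mulr1 expRM_natl => h.
have fact_gt0 : (0 : R) < j.+1`!%:R by rewrite ltr0n fact_gt0.
by rewrite -ler_pdivrMr //; apply: le_trans h; rewrite lerDr.
Qed.

Lemma expR1_le3 (R : realType) : expR 1 <= 3 :> R.
Proof.
have lo : (7/8 : R) <= expR (- (1/8)) by have := @expR_ge1Dx R (- (1/8)); lra.
have hi : expR (1/8) <= 8/7 :> R.
  rewrite -[1/8]opprK expRN -[8/7 : R]invf_div lef_pV2 ?posrE ?expR_gt0 //; lra.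
have -> : (1 : R) = 8%:R * (1/8) by field.
rewrite expRM_natl; apply: (le_trans (y := (8/7 : R) ^+ 8)); last by lra.
by apply: lerXn2r; rewrite ?nnegrE ?expR_ge0 //; lra.
Qed.

Lemma bin_le_expR (R : realType) (m k : nat) : (0 < k)%N ->
  'C(m, k)%:R <= (expR 1 * m%:R / k%:R) ^+ k :> R.
Proof.
move=> k_gt0.
have kfact_gt0 : (0 : R) < k`!%:R by rewrite ltr0n fact_gt0.
have kk_gt0 : (0 : R) < k%:R ^+ k by rewrite exprn_gt0 // ltr0n.
have bin_fact : 'C(m, k)%:R * k`!%:R <= m%:R ^+ k :> R.
  by rewrite -natrM -natrX ler_nat bin_ffact ffact_leq_expn.
rewrite !exprMn exprVn ler_pdivlMr //.
apply: (le_trans (y := 'C(m, k)%:R * (expR 1 ^+ k * k`!%:R))).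
  by rewrite ler_wpM2l // natr_expn_le_expR_fact.
by rewrite mulrCA ler_wpM2l ?exprn_ge0 ?expR_ge0.
Qed.

Lemma bin_mul_expr_le (R : realType) (q b : R) (m k v : nat) :
  0 <= q -> (v <= k)%N -> expR 1 * m%:R * q / k%:R <= b -> b <= 1 ->
  'C(m, k)%:R * q ^+ k <= b ^+ v.
Proof.
move=> q_ge0 vk base_le b_le1.
have base_ge0 : 0 <= expR 1 * m%:R * q / k%:R :> R.
  by rewrite !mulr_ge0 ?expR_ge0 ?invr_ge0.
have b_ge0 := le_trans base_ge0 base_le.
case: (posnP k) vk => [->|k_gt0] vk.
  by move: vk; rewrite leqn0 => /eqP ->; rewrite bin0 !expr0 mulr1.
apply: (le_trans (y := (expR 1 * m%:R / k%:R) ^+ k * q ^+ k)).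
  by rewrite ler_wpM2r ?exprn_ge0 ?bin_le_expR.
rewrite -exprMn mulrAC (le_trans (y := b ^+ k)) ?ler_wiXn2l //.
by apply: lerXn2r; rewrite ?nnegrE.
Qed.

Lemma natr_expn15_le_exp40 (R : realType) v :
  (21 <= v)%N -> 3 * (2 * v)%:R ^+ 15 <= (40 : R) ^+ v.
Proof.
move=> /subnKC <-; elim: (v - 21)%N => [|i IH]; first by rewrite /=; lra.
rewrite addnS [(40 : R) ^+ _.+1]exprS.
apply: (le_trans (y := 40 * (3 * (2 * (21 + i))%:R ^+ 15))); last by rewrite ler_wpM2l.
set w := (21 + i)%N.
have w21 : (21 : R) <= w%:R by rewrite ler_nat leq_addr.
have step : (2 * w.+1)%:R <= (5/4) * (2 * w)%:R :> R.
  by rewrite !natrM -[w.+1]addn1 natrD; lra.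
have := lerXn2r 15 (ler0n _ _) _ step; rewrite nnegrE exprMn => /(_ ltac:(lra)) h.
have w15_ge0 : (0 : R) <= (2 * w)%:R ^+ 15 by rewrite exprn_ge0.
have : ((5 : R) / 4) ^+ 15 <= 40 by lra.
nra.
Qed.

(* Used with c = e, u = v/n and w = gamma/C, where c u / (4 w) is the base b. *)
Lemma ratio_pow5_bounds (R : realType) (c u w : R) :
  0 <= c -> c <= 3 -> 0 < u -> u <= 1/2 -> 0 < w -> 10 * u <= w ^+ 5 ->
  (c * u / (4 * w)) ^+ 5 <= 1 /\ (2 * c / u) * (c * u / (4 * w)) ^+ 5 <= u ^+ 3 / 5.
Proof.
move=> c_ge0 c_le3 u_gt0 u_le w_gt0 hw.
have w5_gt0 : 0 < w ^+ 5 by rewrite exprn_gt0.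
have b5E : (c * u / (4 * w)) ^+ 5 = c ^+ 5 * u ^+ 5 / (1024 * w ^+ 5).
  by rewrite expr_div_n !exprMn; congr (_ / (_ * _)); lra.
have powc (i : nat) : c ^+ i <= 3 ^+ i by apply: lerXn2r; rewrite ?nnegrE.
have c5 : c ^+ 5 <= 243 by apply: le_trans (powc 5) _; lra.
have c6 : c ^+ 6 <= 729 by apply: le_trans (powc 6) _; lra.
have u4 : u ^+ 4 <= 1/16.
  by apply: (le_trans (y := (1/2) ^+ 4)); [apply: lerXn2r; rewrite ?nnegrE; lra | lra].
have c5_ge0 : 0 <= c ^+ 5 by rewrite exprn_ge0.
have u4_ge0 : 0 <= u ^+ 4 by rewrite exprn_ge0 // ltW.
split.
  rewrite b5E ler_pdivrMr ?mul1r; last by lra.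
  rewrite [u ^+ 5]exprSr (le_trans (y := 243 * (1/16 * u))) //; last by lra.
  apply: ler_pM => //; first by rewrite mulr_ge0 // ltW.
  by rewrite ler_wpM2r // ltW.
have -> : 2 * c / u * (c * u / (4 * w)) ^+ 5 =
    u ^+ 3 / 5 * (10 * (c ^+ 6 * u) / (1024 * w ^+ 5)).
  by rewrite b5E; field; rewrite !gt_eqF.
apply: ler_piMr; first by rewrite divr_ge0 // exprn_ge0 // ltW.
rewrite ler_pdivrMr ?mul1r; last by lra.
apply: (le_trans (y := 10 * (729 * u))); last by lra.
by rewrite ler_wpM2l // ler_wpM2r // ltW.
Qed.

Lemma expr_cube_div5_le (R : realType) (u : R) (v : nat) :
  0 < u -> u <= 1/2 -> (5 <= v)%N ->
  (u ^+ 3 / 5) ^+ v <= (2 * u) ^+ 15 * (1/40) ^+ v.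
Proof.
move=> u_gt0 u_le v_ge5; have v15 : (15 <= 3 * v)%N by lia.
have lhsE : (u ^+ 3 / 5) ^+ v = u ^+ 15 * u ^+ (3 * v - 15) * (1/5) ^+ v.
  by rewrite -exprD subnKC // exprM -exprMn mul1r.
have rhsE : (2 * u) ^+ 15 * (1/40) ^+ v =
    u ^+ 15 * (1/2) ^+ (3 * v - 15) * (1/5) ^+ v.
  have -> : (1/40 : R) = (1/2) ^+ 3 * (1/5) by lra.
  have split_half : (1/2 : R) ^+ (3 * v) = (1/2) ^+ 15 * (1/2) ^+ (3 * v - 15).
    by rewrite -exprD subnKC.
  rewrite [((1/2) ^+ 3 * _) ^+ v]exprMn -exprM split_half.
  set A := (1/2 : R) ^+ (3 * v - 15); set B := (1/5 : R) ^+ v; by field.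
rewrite lhsE rhsE; apply: ler_wpM2r; first by rewrite exprn_ge0 //; lra.
rewrite ler_wpM2l ?exprn_ge0 ?(ltW u_gt0) //.
by apply: lerXn2r; rewrite ?nnegrE ?(ltW u_gt0) //; lra.
Qed.

Lemma card_vtx_set n (V : {set vtx n}) :
  #|V| = (#|[set i | inl i \in V]| + #|[set j | inr j \in V]|)%N.
Proof.
rewrite -!sum1_card /= (big_sumType _ (fun x => x \in V)) /=.
by congr (_ + _)%N; apply: eq_bigl => x; rewrite inE.
Qed.

Lemma card_induced_setT n (V : {set vtx n}) :
  (4 * #|induced [set: edge n] V| <= #|V| ^ 2)%N.
Proof.
have -> : induced [set: edge n] V = finset.setX [set i | inl i \in V] [set j | inr j \in V].
  by apply/setP => -[i j]; rewrite !inE.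
by rewrite cardsX card_vtx_set; exact: (nat_AGM2 _ _).1.
Qed.

Lemma sum_set_vtx_card (R : realType) n (f : nat -> R) :
  \sum_(V : {set vtx n}) f #|V| = \sum_(j < (n + n).+1) 'C(n + n, j)%:R * f j.
Proof.
have cardT : #|vtx n| = (n + n)%N by rewrite /vtx card_sum card_ord.
rewrite (partition_big (fun V : {set vtx n} => (inord #|V| : 'I_(n + n).+1)) xpredT) //=.
apply: eq_bigr => j _.
rewrite (eq_bigl (fun V => V \in [set V : {set vtx n} | #|V| == j])); last first.
  by move=> V; rewrite inE -val_eqE /= inordK // ltnS -cardT max_card.
rewrite (eq_bigr (fun _ => f j)); last by move=> V; rewrite inE => /eqP ->.
by rewrite sumr_const card_draws cardT mulr_natl.
Qed.

Definition dense_size {R : realType} (beta : R) (v : nat) : nat :=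
  (Num.truncn (beta * v%:R)).+1.

Lemma not_sparse_dense_subset (R : realType) n (alpha beta : R) (H : {set edge n}) :
  (0 < n)%N -> 0 <= beta -> ~ sparse alpha (beta / n%:R) H ->
  exists2 V : {set vtx n}, #|V|%:R < 2 * alpha * n%:R &
    exists S : {set edge n}, [&& S \subset H,
      S \subset induced [set: edge n] V & #|S| == dense_size beta #|V|].
Proof.
move=> n_gt0 beta_ge0 not_sparse.
have [V small dense] : exists2 V : {set vtx n},
    #|V|%:R < 2 * alpha * n%:R & beta * #|V|%:R < #|induced H V|%:R.
  apply: contrapT => none; apply: not_sparse => V small; rewrite leNgt.
  apply/negP => dense; apply: none; exists V => //.
  by move: dense; rewrite mulfVK // pnatr_eq0 -lt0n.
exists V => //.
have : (dense_size beta #|V| <= #|induced H V|)%N.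
  by rewrite truncn_lt_nat // mulr_ge0.
rewrite -bin_gt0 -cards_draws card_gt0 => /set0Pn [S].
rewrite inE => /andP [SHV /eqP cardS]; exists S; rewrite cardS eqxx andbT.
apply/andP; split; apply: (fintype.subset_trans SHV); apply/fintype.subsetP => e;
  by rewrite !inE => /andP [].
Qed.

Lemma prob_not_sparse_le (R : realType) n (alpha beta q : R)
    (mu : {ffun {set edge n} -> R}) :
  (0 < n)%N -> 0 <= beta -> (forall H, 0 <= mu H) -> spread q mu ->
  \sum_(H | ~~ `[< sparse alpha (beta / n%:R) H >]) mu H <=
  \sum_(V : {set vtx n} | #|V|%:R < 2 * alpha * n%:R)
    'C(#|induced [set: edge n] V|, dense_size beta #|V|)%:R * q ^+ dense_size beta #|V|.
Proof.
move=> n_gt0 beta_ge0 mu_ge0 mu_spread.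
pose small (V : {set vtx n}) := #|V|%:R < 2 * alpha * n%:R.
pose dense V (S : {set edge n}) :=
  (S \subset induced [set: edge n] V) && (#|S| == dense_size beta #|V|).
pose F (H S : {set edge n}) := if S \subset H then mu H else 0.
have F_ge0 (H : {set edge n}) S : 0 <= F H S by rewrite /F; case: ifP.
have cover (H : {set edge n}) : ~~ `[< sparse alpha (beta / n%:R) H >] ->
    mu H <= \sum_(V | small V) \sum_(S | dense V S) F H S.
  move=> /asboolPn /not_sparse_dense_subset [] // V smallV [S /and3P [SH SV cardS]].
  rewrite (bigD1 V) //= (bigD1 S) /dense ?SV ?cardS //= {1}/F SH -addrA lerDl.
  by rewrite addr_ge0 ?sumr_ge0 // => V' _; exact: sumr_ge0.
apply: (le_trans (ler_sum _ cover)).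
apply: (le_trans (y := \sum_H \sum_(V | small V) \sum_(S | dense V S) F H S)).
  rewrite [X in _ <= X](bigID (fun H => ~~ `[< sparse alpha (beta / n%:R) H >])) /=.
  by rewrite lerDl; do 3!(apply: sumr_ge0 => ? _).
rewrite exchange_big /=; apply: ler_sum => V _.
rewrite exchange_big /=.
apply: (le_trans (y := \sum_(S | dense V S) q ^+ dense_size beta #|V|)).
  apply: ler_sum => S /andP [_ /eqP <-]; apply: le_trans (mu_spread S).
  by rewrite /prob [X in _ <= X]big_mkcond.
rewrite (eq_bigl (fun S => S \in [set S | dense V S])); last by move=> S; rewrite inE.
by rewrite sumr_const cards_draws mulr_natl.
Qed.

Section SpreadTail.
Variables (R : realType) (C alpha gamma r : R) (n : nat).
Hypotheses (C_gt1 : 1 < C) (alpha_gt0 : 0 < alpha) (alpha_lt4 : alpha < 4^-1)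
  (gamma_gt : C * (20 * alpha) `^ (5^-1) < gamma) (r_gt : 5 / gamma < r)
  (n_gt0 : (0 < n)%N).

Local Notation N := (n%:R : R).

Let N_gt0 : 0 < N. Proof. by rewrite ltr0n. Qed.
Let C_gt0 : 0 < C. Proof. exact: lt_trans ltr01 C_gt1. Qed.

Let alpha20_gt0 : 0 < 20 * alpha. Proof. exact: mulr_gt0. Qed.

Let gamma_gt0 : 0 < gamma.
Proof. by apply: lt_trans gamma_gt; rewrite mulr_gt0 // powR_gt0. Qed.

Let r_gt0 : 0 < r. Proof. by apply: lt_trans r_gt; rewrite divr_gt0. Qed.

Lemma gamma_r_gt5 : 5 < gamma * r.
Proof. by move: r_gt; rewrite ltr_pdivrMr // mulrC. Qed.

Lemma alpha_C5_lt_gamma5 : 20 * alpha * C ^+ 5 < gamma ^+ 5.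
Proof.
have root5 : ((20 * alpha) `^ (5^-1)) ^+ 5 = 20 * alpha.
  by rewrite -powR_mulrn ?powR_ge0 // -powRrM mulVf ?powRr1 ?(ltW alpha20_gt0) ?pnatr_eq0.
have := ltrXn2r 5 (ltW (mulr_gt0 C_gt0 (powR_gt0 _ alpha20_gt0))) gamma_gt.
by rewrite exprMn root5 mulrC.
Qed.

Definition tail_base (v : nat) : R := expR 1 * (v%:R / N) / (4 * (gamma / C)).

Definition tail_term (v : nat) : R :=
  if (20 < v)%N && (v%:R < 2 * alpha * N) then tail_base v ^+ (5 * v) else 0.

Lemma tail_base_ge0 v : 0 <= tail_base v.
Proof.
have den_gt0 : 0 < 4 * (gamma / C) by rewrite mulr_gt0 ?divr_gt0.
apply: divr_ge0 (ltW den_gt0).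
by apply: mulr_ge0; [exact: expR_ge0 | rewrite divr_ge0 ?ler0n].
Qed.

Lemma tail_term_ge0 v : 0 <= tail_term v.
Proof. by rewrite /tail_term; case: ifP => // _; rewrite exprn_ge0 ?tail_base_ge0. Qed.

Lemma small_ratio_bounds v : (0 < v)%N -> v%:R < 2 * alpha * N ->
  [/\ 0 < v%:R / N, v%:R / N <= 1/2 & 10 * (v%:R / N) <= (gamma / C) ^+ 5].
Proof.
move=> v_gt0 small; have vN : v%:R / N * N = v%:R by rewrite mulfVK ?gt_eqF.
have u_lt : v%:R / N < 2 * alpha by rewrite ltr_pdivrMr.
split; [by rewrite divr_gt0 ?ltr0n | by have := alpha_lt4; lra |].
rewrite expr_div_n ler_pdivlMr ?exprn_gt0 //.
have := alpha_C5_lt_gamma5; have : 0 < C ^+ 5 by rewrite exprn_gt0.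
nra.
Qed.

Lemma tail_base_bounds v : (0 < v)%N -> v%:R < 2 * alpha * N ->
  tail_base v <= 1 /\
  (2 * expR 1 / (v%:R / N)) * tail_base v ^+ 5 <= (v%:R / N) ^+ 3 / 5.
Proof.
move=> v_gt0 small; have [u_gt0 u_le hw] := small_ratio_bounds v_gt0 small.
have [b5_le1 ->] := ratio_pow5_bounds (expR_ge0 1) (expR1_le3 R) u_gt0 u_le
  (divr_gt0 gamma_gt0 C_gt0) hw.
split => //; move: b5_le1.
rewrite -[X in _ <= X](expr1n _ 5) ler_pXn2r // nnegrE ?ler01 //.
exact: (tail_base_ge0 v).
Qed.

Lemma bin_spread_le_tail_term (V : {set vtx n}) : #|V|%:R < 2 * alpha * N ->
  'C(#|induced [set: edge n] V|, dense_size (gamma * r) #|V|)%:R *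
    (C * r / N) ^+ dense_size (gamma * r) #|V| <= tail_term #|V|.
Proof.
move=> small; rewrite /tail_term small andbT.
set v := #|V|; set m := #|induced [set: edge n] V|; set k := dense_size _ v.
have beta_gt5 := gamma_r_gt5.
have k_gt : gamma * r * v%:R < k%:R by exact: truncnS_gt.
have m_le : 4 * m%:R <= v%:R ^+ 2 :> R.
  by rewrite -natrX -(natrM R 4) ler_nat card_induced_setT.
have [v_gt20|v_le20] := ltnP 20 v; last first.
  rewrite bin_small ?mul0r // -(ltr_nat R); apply: le_lt_trans k_gt.
  have : v%:R <= 20 :> R by rewrite (ler_nat R v 20).
  have : 0 <= v%:R :> R by [].
  nra.
have v_gt0 : (0 < v)%N by apply: leq_trans v_gt20.
have vR_gt0 : 0 < v%:R :> R by rewrite ltr0n.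
have beta_v_gt0 : 0 < gamma * r * v%:R by rewrite mulr_gt0 // (lt_trans _ beta_gt5).
have q_ge0 : 0 <= C * r / N := divr_ge0 (mulr_ge0 (ltW C_gt0) (ltW r_gt0)) (ltW N_gt0).
have [b_le1 _] := tail_base_bounds v_gt0 small.
apply: (bin_mul_expr_le q_ge0 _ _ b_le1).
  rewrite -(ler_nat R) natrM; apply/ltW/(le_lt_trans _ k_gt).
  by rewrite ler_wpM2r // ltW.
apply: (le_trans (y := expR 1 * m%:R * (C * r / N) / (gamma * r * v%:R))).
  rewrite ler_wpM2l //; first exact: mulr_ge0 (mulr_ge0 (expR_ge0 1) (ler0n _ m)) q_ge0.
  by rewrite lef_pV2 ?posrE ?(ltW k_gt) // (lt_trans beta_v_gt0 k_gt).
have -> : expR 1 * m%:R * (C * r / N) / (gamma * r * v%:R) =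
    expR 1 * C / (N * gamma) * (m%:R / v%:R) by field; rewrite !gt_eqF.
have -> : tail_base v = expR 1 * C / (N * gamma) * (v%:R / 4).
  by rewrite /tail_base; field; rewrite !gt_eqF.
rewrite ler_wpM2l ?divr_ge0 ?mulr_ge0 ?expR_ge0 ?(ltW C_gt0) ?(ltW gamma_gt0) //.
by rewrite ler_pdivrMr ?ltr0n //; rewrite expr2 in m_le; nra.
Qed.

Lemma bin_tail_term_le j : 'C(n + n, j)%:R * tail_term j <= N ^- 15 / 3.
Proof.
rewrite /tail_term; case: ifP => [/andP [j_gt20 small]|_]; last first.
  by rewrite mulr0 divr_ge0 // invr_ge0 exprn_ge0 // ltW.
have j_gt0 : (0 < j)%N by apply: leq_trans j_gt20.
have [u_gt0 u_le _] := small_ratio_bounds j_gt0 small.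
have [_ b5_le] := tail_base_bounds j_gt0 small.
apply: (le_trans (y := (expR 1 * (n + n)%:R / j%:R * tail_base j ^+ 5) ^+ j)).
  by rewrite [X in _ <= X]exprMn -exprM ler_wpM2r ?exprn_ge0 ?tail_base_ge0 ?bin_le_expR.
have -> : expR 1 * (n + n)%:R / j%:R = 2 * expR 1 / (j%:R / N).
  by rewrite natrD; field; rewrite !gt_eqF // ltr0n.
apply: (le_trans (y := ((j%:R / N) ^+ 3 / 5) ^+ j)).
  apply: lerXn2r; rewrite ?nnegrE // ?divr_ge0 ?exprn_ge0 ?(ltW u_gt0) //.
  by rewrite mulr_ge0 ?exprn_ge0 ?tail_base_ge0 // divr_ge0 ?(ltW u_gt0) ?mulr_ge0 ?expR_ge0.
apply: (le_trans (expr_cube_div5_le u_gt0 u_le (leq_trans _ j_gt20))) => //.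
have -> : (2 * (j%:R / N)) ^+ 15 * (1 / 40) ^+ j =
    N ^- 15 * ((2 * j)%:R ^+ 15 / 40 ^+ j).
  rewrite natrM exprMn expr_div_n exprMn expr1n -exprVn; field.
  by rewrite !gt_eqF ?exprn_gt0.
rewrite ler_pM2l ?invr_gt0 ?exprn_gt0 // ler_pdivrMr ?exprn_gt0 //.
by have := natr_expn15_le_exp40 R j_gt20; lra.
Qed.

Lemma sum_bin_spread_le :
  \sum_(V : {set vtx n} | #|V|%:R < 2 * alpha * N)
    'C(#|induced [set: edge n] V|, dense_size (gamma * r) #|V|)%:R *
      (C * r / N) ^+ dense_size (gamma * r) #|V| <= N ^- 14.
Proof.
apply: (le_trans (ler_sum _ (fun V => bin_spread_le_tail_term (V := V)))).
apply: (le_trans (y := \sum_(V : {set vtx n}) tail_term #|V|)).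
  by rewrite [X in _ <= X](bigID (fun V : {set vtx n} => #|V|%:R < 2 * alpha * N)) /=
    lerDl sumr_ge0 // => V _; exact: tail_term_ge0.
rewrite sum_set_vtx_card.
apply: (le_trans (ler_sum _ (fun (j : 'I_(n + n).+1) _ => bin_tail_term_le j))).
rewrite sumr_const card_ord -[_ *+ _]mulr_natr.
have -> : N ^- 14 = N ^- 15 * N by field; rewrite gt_eqF.
rewrite -mulrA ler_pM2l ?invr_gt0 ?exprn_gt0 // -[(n + n).+1]addn1 !natrD.
have N_ge1 : 1 <= N by rewrite ler1n.
lra.
Qed.

End SpreadTail.

Theorem lemma2p6 (R : realType) (C alpha gamma r : R) (n : nat)
  (mu : {ffun {set edge n} -> R}) :
  1 < C -> 0 < alpha -> alpha < 4^-1 ->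
  C * (20 * alpha) `^ (5^-1) < gamma ->
  5 / gamma < r ->
  (0 < n)%N ->
  is_distr mu ->
  spread (C * r / n%:R) mu ->
  1 - (n%:R ^- 14) <=
    \sum_(H : {set edge n} | `[< sparse alpha (gamma * r / n%:R) H >]) mu H.
Proof.
move=> C_gt1 alpha_gt0 alpha_lt4 gamma_gt r_gt n_gt0 [mu_ge0 mu_sum1] mu_spread.
have beta_ge0 : 0 <= gamma * r.
  by apply: ltW; apply: lt_trans (gamma_r_gt5 C_gt1 alpha_gt0 gamma_gt r_gt).
have fail_le := le_trans (prob_not_sparse_le alpha n_gt0 beta_ge0 mu_ge0 mu_spread)
  (sum_bin_spread_le C_gt1 alpha_gt0 alpha_lt4 gamma_gt r_gt n_gt0).
move: mu_sum1; rewrite (bigID (fun H => `[< sparse alpha (gamma * r / n%:R) H >])) /=.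
lra.
Qed.
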